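(* Let $n$ be an even positive integer and let $\mathbb{F}$ be a field with $\operatorname{char}(\mathbb{F})\neq 2$ and $|\mathbb{F}|\geq n^2+1$. Let $Q_n$ denote the set of all $n\times n$ skew-symmetric matrices over $\mathbb{F}$. If $a,b\in Q_n$ satisfy $\det(a+x)=\det(b+x)$ for all $x\in Q_n$, then $a=b$.
   Context: A matrix $x$ is skew-symmetric if $x^t=-x$. *)

From HB Require Import structures.
From mathcomp Require Import all_boot all_order all_algebra.
Set Implicit Arguments. Unset Strict Implicit. Unset Printing Implicit Defensive.
Import GRing.Theory.
Local Open Scope ring_scope.

Definition skew_symmetric (F : fieldType) (n : nat) (x : 'M[F]_n) : Prop :=
  x^T = - x.

(* |F| >= m, valid also for infinite F: F contains m pairwise distinct elements. *)
Definition card_at_least (F : fieldType) (m : nat) : Prop :=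
  exists s : seq F, uniq s /\ (m <= size s)%N.

From HB Require Import structures.
From mathcomp Require Import all_boot all_order all_algebra zify.
Import GRing.Theory.
Local Open Scope ring_scope.
Set Implicit Arguments. Unset Strict Implicit.

(* Put c := a - b.  Then det (c + y) = det y for every skew y, hence by
   homogeneity det (y + t c) = det y for every scalar t.  For an invertible skew
   z this gives det (u - z c) = det z * det (u z^-1 - c) = u^n for all u, so z c
   has characteristic polynomial X^n and tr (z c) = 0.  Since n is even there is
   an invertible skew J, and u J + E is invertible for all but n values of u;
   as the trace is affine in u, tr (E c) = 0 for every skew E.  Taking
   E = e_ji - e_ij gives 2 c_ij = 0. *)

Lemma horner_char_poly (R : comNzRingType) n (A : 'M[R]_n) x :
  (char_poly A).[x] = \det (x%:M - A).
Proof.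
rewrite -horner_evalE /char_poly -det_map_mx; congr (\det _).
by apply/matrixP => i j; rewrite !mxE rmorphB rmorphMn /= !horner_evalE hornerX hornerC.
Qed.

Lemma tr_delta_mul (R : comNzRingType) n (i j : 'I_n) (c : 'M[R]_n) :
  \tr (delta_mx i j *m c) = c j i.
Proof.
rewrite mxtrace_mulC /mxtrace (bigD1 j) //= big1 ?addr0 => [|k kj].
  rewrite mxE (bigD1 i) //= big1 ?addr0 => [|l li]; first by rewrite mxE !eqxx mulr1.
  by rewrite mxE (negbTE li) mulr0.
by rewrite mxE big1 // => l _; rewrite mxE (negbTE kj) andbF mulr0.
Qed.

Section SkewSymmetric.
Variable F : fieldType.

Lemma skew_symmetricD n (x y : 'M[F]_n) :
  skew_symmetric x -> skew_symmetric y -> skew_symmetric (x + y).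
Proof. by rewrite /skew_symmetric => hx hy; rewrite linearD /= hx hy opprD. Qed.

Lemma skew_symmetricB n (x y : 'M[F]_n) :
  skew_symmetric x -> skew_symmetric y -> skew_symmetric (x - y).
Proof. by rewrite /skew_symmetric => hx hy; rewrite linearB /= hx hy opprD. Qed.

Lemma skew_symmetricZ n t (x : 'M[F]_n) : skew_symmetric x -> skew_symmetric (t *: x).
Proof. by rewrite /skew_symmetric => hx; rewrite linearZ /= hx scalerN. Qed.

Lemma skew_symmetric_invmx n (x : 'M[F]_n) :
  skew_symmetric x -> skew_symmetric (invmx x).
Proof.
rewrite /skew_symmetric => hx; rewrite trmx_inv hx.
have [xu|xNu] := boolP (x \in unitmx); last first.
  by rewrite !invmx_out // inE -scaleN1r unitmxZ ?unitrN1.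
by rewrite -scaleN1r invmxZ ?unitmxZ ?unitrN1 // invrN1 scaleN1r.
Qed.

End SkewSymmetric.

Lemma card_at_leastW (F : fieldType) m1 m2 : (m1 <= m2)%N -> card_at_least F m2 -> card_at_least F m1.
Proof. by move=> m12 [s [us hs]]; exists s; rewrite us (leq_trans m12 hs). Qed.

Lemma card_at_least_eq_poly (F : fieldType) (p q : {poly F}) :
  card_at_least F (maxn (size p) (size q)) -> (forall x, p.[x] = q.[x]) -> p = q.
Proof.
move=> [s [us hs]] hpq; apply/subr0_eq/(roots_geq_poly_eq0 _ us).
  by apply/allP => x _; rewrite /root hornerD hornerN hpq subrr.
by rewrite (leq_trans (size_polyD _ _)) // size_polyN.
Qed.

Lemma two_nonroots (F : fieldType) (p : {poly F}) : p != 0 -> card_at_least F (size p).+1 ->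
  exists u v, [/\ u != v, ~~ root p u & ~~ root p v].
Proof.
move=> p_neq0 [s [us hs]]; pose t := filter (predC (root p)) s.
have t_ge2 : (2 <= size t)%N.
  have := max_poly_roots p_neq0 (filter_all (root p) s) (filter_uniq _ us).
  move: hs; rewrite /t !size_filter -(count_predC (root p) s).
  by move: (count _ s) (count _ s) (size p) => k l m; lia.
have t_nonroot k : (k < size t)%N -> ~~ root p (nth 0 t k).
  by move=> kt; have := mem_nth 0 kt; rewrite mem_filter => /andP [].
exists (nth 0 t 0), (nth 0 t 1).
split; [|exact: t_nonroot (ltnW t_ge2)|exact: t_nonroot t_ge2].
by rewrite nth_uniq ?filter_uniq // ltnW.
Qed.

Lemma det_scale_add_unitmx (R : comUnitRingType) n (J E : 'M[R]_n) u : J \in unitmx ->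
  \det (u *: J + E) = \det J * (char_poly (- (invmx J *m E))).[u].
Proof.
move=> Ju; rewrite horner_char_poly -det_mulmx mulmxBr mul_mx_scalar.
by rewrite mulmxN opprK mulKVmx.
Qed.

Definition symplectic_mx (R : pzRingType) m : 'M[R]_(m + m) :=
  block_mx 0 1%:M (- 1%:M) 0.

Lemma symplectic_mx_sqr (R : pzRingType) m :
  symplectic_mx R m *m symplectic_mx R m = - 1%:M.
Proof.
rewrite mulmx_block !(mul0mx, mulmx0, mul1mx, mulmx1, add0r, addr0).
by rewrite (scalar_mx_block m m) opp_block_mx oppr0.
Qed.

Lemma symplectic_mx_skew (F : fieldType) m : skew_symmetric (symplectic_mx F m).
Proof.
by rewrite /skew_symmetric tr_block_mx !trmx0 linearN /= trmx1 opp_block_mx !oppr0 opprK.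
Qed.

Lemma symplectic_mx_unit (F : fieldType) m : symplectic_mx F m \in unitmx.
Proof.
have J_mulN : symplectic_mx F m *m (- symplectic_mx F m) = 1%:M.
  by rewrite mulmxN symplectic_mx_sqr opprK.
by case: (mulmx1_unit J_mulN).
Qed.

Section SkewTranslationInvariantDet.
Variables (F : fieldType) (n : nat) (c : 'M[F]_n).
Hypothesis det_addl : forall y, skew_symmetric y -> \det (c + y) = \det y.

Lemma det_add_scale (y : 'M[F]_n) t : skew_symmetric y -> \det (y + t *: c) = \det y.
Proof.
move=> y_skew; have [->|t_neq0] := eqVneq t 0; first by rewrite scale0r addr0.
have -> : y + t *: c = t *: (c + t^-1 *: y).
  by rewrite scalerDr scalerA mulfV // scale1r addrC.
rewrite detZ det_addl; last exact: skew_symmetricZ.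
by rewrite detZ mulrA -exprMn mulfV // expr1n mul1r.
Qed.

Lemma char_poly_mul_skew (z : 'M[F]_n) : card_at_least F n.+1 ->
  skew_symmetric z -> z \in unitmx -> char_poly (z *m c) = 'X^n.
Proof.
move=> hF z_skew zu; apply: card_at_least_eq_poly => [|u].
  by rewrite size_char_poly size_polyXn maxnn.
rewrite hornerXn horner_char_poly.
have -> : u%:M - z *m c = z *m (u *: invmx z + (-1) *: c).
  by rewrite mulmxDr -!scalemxAr mulmxV // scalemx1 scaleN1r.
rewrite det_mulmx det_add_scale; last first.
  exact/skew_symmetricZ/skew_symmetric_invmx.
by rewrite -det_mulmx -scalemxAr mulmxV // scalemx1 det_scalar.
Qed.

Lemma trace_mul_skew_unitmx (z : 'M[F]_n) : (0 < n)%N -> card_at_least F n.+1 ->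
  skew_symmetric z -> z \in unitmx -> \tr (z *m c) = 0.
Proof.
move=> n_gt0 hF z_skew zu; apply/eqP; rewrite -oppr_eq0 -char_poly_trace //.
by rewrite char_poly_mul_skew // coefXn ltn_eqF // prednK.
Qed.

Lemma trace_mul_skew (J E : 'M[F]_n) : (0 < n)%N -> card_at_least F n.+2 ->
  skew_symmetric J -> J \in unitmx -> skew_symmetric E -> \tr (E *m c) = 0.
Proof.
move=> n_gt0 hF J_skew Ju E_skew; pose p := char_poly (- (invmx J *m E)).
have [u [v [uv pu pv]]] : exists u v, [/\ u != v, ~~ root p u & ~~ root p v].
  by apply: two_nonroots; rewrite ?monic_neq0 ?char_poly_monic ?size_char_poly.
have tr_affine_eq0 w : ~~ root p w -> w * \tr (J *m c) + \tr (E *m c) = 0.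
  move=> pw; rewrite -mxtraceZ -mxtraceD scalemxAl -mulmxDl.
  apply: trace_mul_skew_unitmx => //; first exact: card_at_leastW hF.
    exact/skew_symmetricD/E_skew/skew_symmetricZ.
  rewrite unitmxE det_scale_add_unitmx // unitfE; apply: mulf_neq0 pw.
  by rewrite -unitfE -unitmxE.
have : u * \tr (J *m c) = v * \tr (J *m c).
  by apply: (addIr (\tr (E *m c))); rewrite !tr_affine_eq0.
move/eqP; rewrite -subr_eq0 -mulrBl mulf_eq0 subr_eq0 (negbTE uv) /= => /eqP trJ.
by rewrite -(tr_affine_eq0 u pu) trJ mulr0 add0r.
Qed.

End SkewTranslationInvariantDet.

Lemma skew_eq0_of_trace (F : fieldType) n (c : 'M[F]_n) : 2%N \notin [pchar F] ->
  skew_symmetric c -> (forall E, skew_symmetric E -> \tr (E *m c) = 0) -> c = 0.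
Proof.
move=> F2 c_skew trc; have two_neq0 : (2%:R : F) != 0 by move: F2; rewrite inE.
apply/matrixP => i j; rewrite mxE.
have E_skew : skew_symmetric (delta_mx j i - delta_mx i j : 'M[F]_n).
  by rewrite /skew_symmetric linearB /= !trmx_delta opprB.
have cji : c j i = - c i j by move/matrixP/(_ i j): c_skew; rewrite !mxE.
have /eqP := trc _ E_skew; rewrite mulmxBl linearB /= !tr_delta_mul cji opprK.
by rewrite -mulr2n -mulr_natr mulf_eq0 (negbTE two_neq0) orbF => /eqP.
Qed.

Unset Implicit Arguments. Set Strict Implicit.

Theorem lemma2p4 (F : fieldType) (n : nat)
  (hn_pos : (0 < n)%N) (hn_even : ~~ odd n)
  (hchar : 2%N \notin [pchar F])
  (hcard : card_at_least F (n ^ 2).+1)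
  (a b : 'M[F]_n) (ha : skew_symmetric a) (hb : skew_symmetric b)
  (hdet : forall x : 'M[F]_n, skew_symmetric x -> \det (a + x) = \det (b + x)) :
  a = b.
Proof.
have det_addl y : skew_symmetric y -> \det (a - b + y) = \det y.
  move=> y_skew; rewrite addrAC -addrA hdet; last exact: skew_symmetricB.
  by rewrite [b + _]addrC subrK.
have [J [J_skew Ju]] : exists J : 'M[F]_n, skew_symmetric J /\ J \in unitmx.
  rewrite -(odd_double_half n) (negbTE hn_even) add0n -addnn.
  exists (symplectic_mx F n./2).
  by split; [exact: symplectic_mx_skew | exact: symplectic_mx_unit].
have hF : card_at_least F n.+2.
  have n_gt1 : (1 < n)%N by rewrite ltn_neqAle hn_pos andbT; apply: contraNneq hn_even => <-.
  by apply: card_at_leastW hcard; nia.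
apply/subr0_eq/(skew_eq0_of_trace hchar (skew_symmetricB ha hb)) => E E_skew.
exact: (trace_mul_skew det_addl hn_pos hF J_skew Ju E_skew).
Qed.
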